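(* Let $r\ge1$ and $n\ge2r$. For every integer $i\ge0$, the restricted Casimir polynomial $C_{2i+1}(x_1,\dots,x_r)$ lies in the subalgebra of $\mathbb{C}[x_1,\dots,x_r]$ generated by the constants and the polynomials $C_{2k}(x_1,\dots,x_r)$ for $k\ge1$.
   Context: Casimir eigenvalues. For $\nu=(\nu_1,\dots,\nu_n)$ and an integer $p\ge 0$, let $$c_p(\nu)=\sum_{i=1}^n(\nu_i+n-i)^p\prod_{j\ne i}\Bigl(1-\frac{1}{\nu_i-\nu_j+j-i}\Bigr).$$ This rational expression is in fact a polynomial in $\nu$; it is the eigenvalue of the higher Casimir operator $\mathrm{tr}(\mathbf E^p)$ of $\mathfrak{gl}_n$ on the irreducible module of highest weight $\nu$. The restricted Casimir polynomial is $$C_p(x_1,\dots,x_r)=c_p(x_1,\dots,x_r,\underbrace{0,\dots,0}_{n-2r},-x_r,\dots,-x_1).$$ *)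

From HB Require Import structures.
From mathcomp Require Import all_boot all_order all_algebra.
Set Implicit Arguments. Unset Strict Implicit. Unset Printing Implicit Defensive.
Import Order.TTheory GRing.Theory Num.Theory.
Local Open Scope ring_scope.

(* Casimir eigenvalue c_p(nu) for nu = (nu_1,...,nu_n), written with 0-based
   indices i : 'I_n (so the paper's i is i+1, and n - i becomes n - 1 - i):
   c_p(nu) = sum_i (nu_i + n - 1 - i)^p prod_{j <> i} (1 - 1/(nu_i - nu_j + j - i)). *)
Definition casimir (R : fieldType) (n p : nat) (nu : 'I_n -> R) : R :=
  \sum_(i < n) (nu i + (n - 1 - i)%:R) ^+ p *
     \prod_(j < n | j != i) (1 - (nu i - nu j + (j : nat)%:R - (i : nat)%:R)^-1).

Definition xat (R : fieldType) (r : nat) (x : 'I_r -> R) (k : nat) : R :=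
  if insub k is Some i then x i else 0.

(* nu = (x_1,...,x_r, 0,...,0 (n-2r times), -x_r,...,-x_1) *)
Definition restr_weight (R : fieldType) (r n : nat) (x : 'I_r -> R) : 'I_n -> R :=
  fun k => if (k < r)%N then xat x k
           else if (k < n - r)%N then 0
           else - xat x (n - 1 - k).

(* restricted Casimir polynomial C_p(x_1,...,x_r), via the rational expression *)
Definition Crestr (R : fieldType) (r n p : nat) (x : 'I_r -> R) : R :=
  @casimir R n p (@restr_weight R r n x).

Definition generic (R : fieldType) (r n : nat) (x : 'I_r -> R) : Prop :=
  forall i j : 'I_n, i != j ->
    @restr_weight R r n x i - @restr_weight R r n x j + (j : nat)%:R - (i : nat)%:R != 0.

Inductive in_subalg (R : fieldType) (r n : nat) : (('I_r -> R) -> R) -> Prop :=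
| sub_const (c : R) : @in_subalg R r n (fun _ => c)
| sub_gen (k : nat) : (1 <= k)%N -> @in_subalg R r n (fun x => @Crestr R r n (2 * k) x)
| sub_add f g : @in_subalg R r n f -> @in_subalg R r n g -> @in_subalg R r n (fun x => f x + g x)
| sub_mul f g : @in_subalg R r n f -> @in_subalg R r n g -> @in_subalg R r n (fun x => f x * g x).

From HB Require Import structures.
From mathcomp Require Import all_boot all_order all_algebra.
From mathcomp Require Import ring zify.
Set Implicit Arguments. Unset Strict Implicit. Unset Printing Implicit Defensive.
Import Order.TTheory GRing.Theory Num.Theory.
Local Open Scope ring_scope.

(* Put l_k = nu_k + n - 1 - k - n/2.  Then c_p(nu) = sum_k w_k (l_k + n/2)^p with
   w_k = prod_(j <> k) (1 - 1/(l_k - l_j)), the partial-fraction coefficients of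
   1 - prod_j (u - l_j - 1)/(u - l_j).  Hence the moments d_q = sum_k w_k l_k^q satisfy
   1 - Psi(z) = E(z)/D(z), where Psi(z) = sum_q d_q z^(q+1), D(z) = prod_j (1 - l_j z)
   and E(z) = prod_j (1 - (l_j + 1) z).  For the restricted weight, k |-> n-1-k maps
   l_k to -1 - l_k, so D(-z) = E(z) and (1 - Psi(z)) (1 - Psi(-z)) = 1: every odd moment
   d_(2m+1) is a polynomial in lower moments.  As C_p is the p-th moment about -n/2 and
   d_0 = n, binomial re-centring and strong induction on q put the moments of order q
   about 0 and about -n/2 in the subalgebra generated by the C_(2k). *)

Section Polynomials.
Variable R : numFieldType.
Implicit Types p q : {poly R}.

Lemma poly_eq_on_nonzero p q : (forall z : R, z != 0 -> p.[z] = q.[z]) -> p = q.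
Proof.
move=> Epq; apply/eqP; rewrite -subr_eq0; apply/eqP.
pose zs := [seq k.+1%:R : R | k <- iota 0 (size (p - q))].
apply: (@roots_geq_poly_eq0 _ _ zs); last by rewrite size_map size_iota.
- apply/allP => _ /mapP [k _ ->].
  by rewrite /root hornerD hornerN Epq ?subrr // pnatr_eq0.
- by rewrite map_inj_uniq ?iota_uniq // => a b /eqP; rewrite eqr_nat => /eqP [].
Qed.

Lemma poly_eq_on_points (n : nat) (z : 'I_n -> R) p q : injective z ->
  (size p <= n)%N -> (size q <= n)%N -> (forall i, p.[z i] = q.[z i]) -> p = q.
Proof.
move=> z_inj sp sq Epq; apply/eqP; rewrite -subr_eq0; apply/eqP.
apply: (@roots_geq_poly_eq0 _ _ [seq z i | i <- enum 'I_n]).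
- by apply/allP => _ /mapP [i _ ->]; rewrite /root hornerD hornerN Epq subrr.
- by rewrite map_inj_uniq ?enum_uniq.
rewrite size_map size_enum_ord (leq_trans (size_polyD _ _)) //.
by rewrite geq_max sp size_polyN.
Qed.

Lemma size_monicB p q : p \is monic -> q \is monic -> size p = size q ->
  (size (p - q)%R < size p)%N.
Proof.
move=> /monicP lp /monicP lq spq.
have sp_gt0 : (0 < size p)%N by rewrite size_poly_gt0 -lead_coef_eq0 lp oner_neq0.
rewrite -(prednK sp_gt0) ltnS; apply/leq_sizeP => j.
rewrite leq_eqVlt => /predU1P [<-|ltj].
  by rewrite coefB -lead_coefE spq -lead_coefE lp lq subrr.
rewrite (prednK sp_gt0) in ltj.
by rewrite coefB !nth_default ?subrr // -spq.
Qed.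

Lemma size_prod_XsubC_cond (I : finType) (P : pred I) (z : I -> R) :
  size (\prod_(j | P j) ('X - (z j)%:P)) = #|P|.+1.
Proof.
rewrite size_prod => [|j _]; last by rewrite polyXsubC_eq0.
under eq_bigr do rewrite size_XsubC.
by rewrite sum_nat_const muln2 -addnn -addSn addnK.
Qed.

Lemma coef1_prod_1subX (I : Type) (s : seq I) (z : I -> R) :
  (\prod_(j <- s) (1 - (z j)%:P * 'X))`_1 = - \sum_(j <- s) z j.
Proof.
elim: s => [|j s IH]; first by rewrite !big_nil coefC oppr0.
rewrite !big_cons mulrBl mul1r -mulrA coefB coefCM coefXM IH /= -horner_coef0.
rewrite horner_prod [X in z j * X]big1 => [|k _]; last by rewrite !hornerE subr0.
by rewrite mulr1 opprD addrC.
Qed.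

Lemma horner_prod_XsubC (I : finType) (P : pred I) (z : I -> R) (t : R) :
  (\prod_(j | P j) ('X - (z j)%:P)).[t] = \prod_(j | P j) (t - z j).
Proof. by rewrite horner_prod; under eq_bigr do rewrite hornerXsubC. Qed.

Lemma horner_prod_1subX (I : finType) (P : pred I) (z : I -> R) (t : R) :
  t != 0 -> (\prod_(j | P j) (1 - (z j)%:P * 'X)).[t] =
            t ^+ #|P| * (\prod_(j | P j) ('X - (z j)%:P)).[t^-1].
Proof.
move=> t0; rewrite !horner_prod -prodr_const -big_split /=.
by apply: eq_bigr => j _; rewrite !hornerE; field.
Qed.

Lemma coef_eq0_of_mulXn (A K T : {poly R}) (M : nat) :
  A`_0 != 0 -> A * K = 'X^M * T -> forall k, (k < M)%N -> K`_k = 0.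
Proof.
move=> A0 EAK k ltkM.
have coprime_XnA : coprimep 'X^M A.
  apply: coprimep_expl; rewrite coprimep_sym -[X in coprimep _ X]subr0.
  by rewrite coprimep_XsubC /root horner_coef0.
have : 'X^M %| K by rewrite -(Gauss_dvdpr _ coprime_XnA) EAK dvdp_mulr.
by rewrite dvdp_eq => /eqP ->; rewrite coefMXn ltkM.
Qed.

Lemma geometric_sum_1subX (c : R) (N : nat) :
  (1 - c%:P * 'X) * \sum_(q < N) c ^+ q *: 'X^q = 1 - c ^+ N *: 'X^N.
Proof.
elim: N => [|N IH]; first by rewrite big_ord0 mulr0 expr0 scale1r expr0 subrr.
rewrite big_ord_recr /= mulrDr IH -!mul_polyC !exprS polyCM; ring.
Qed.

End Polynomials.

Section ShiftMoments.
Variable R : numFieldType.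

(* Partial fractions: sum_i w_i / (u - b i) = 1 - prod_j (u - b j - g) / (u - b j). *)
Definition shift_weight (n : nat) (b : 'I_n -> R) (g : R) (i : 'I_n) : R :=
  g * \prod_(j | j != i) (1 - g / (b i - b j)).

Definition moment (n : nat) (b : 'I_n -> R) (g : R) (q : nat) : R :=
  \sum_i shift_weight b g i * b i ^+ q.

Definition recip_prod (n : nat) (b : 'I_n -> R) : {poly R} :=
  \prod_j (1 - (b j)%:P * 'X).

Lemma coef0_recip_prod (n : nat) (c : 'I_n -> R) : (recip_prod c)`_0 = 1.
Proof.
rewrite -horner_coef0 horner_prod big1 // => j _.
by rewrite !hornerE subr0.
Qed.

Variables (n : nat) (b : 'I_n -> R) (g : R).
Hypothesis b_inj : injective b.

Lemma sum_shift_weight_prod_XsubC :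
  \sum_i (shift_weight b g i)%:P * \prod_(j | j != i) ('X - (b j)%:P) =
  \prod_j ('X - (b j)%:P) - \prod_j ('X - (b j + g)%:P).
Proof.
apply: (poly_eq_on_points b_inj).
- rewrite (leq_trans (size_sum _ _ _)) //; apply/bigmax_leqP => i _.
  rewrite mul_polyC (leq_trans (size_scale_leq _ _)) // size_prod_XsubC_cond.
  by rewrite cardC1 card_ord prednK // (leq_ltn_trans _ (ltn_ord i)).
- have size_prod (z : 'I_n -> R) : size (\prod_j ('X - (z j)%:P)) = n.+1.
    by rewrite (size_prod_XsubC_cond xpredT) card_ord.
  rewrite -ltnS -[X in (_ < X)%N](size_prod b) size_monicB ?monic_prod_XsubC //.
  by rewrite !size_prod.
move=> i; rewrite horner_sum (bigD1 i) //= [X in _ + X]big1 => [|k neq_ki]; last first.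
  rewrite hornerCM horner_prod_XsubC (bigD1 i) 1?eq_sym //=.
  by rewrite subrr mul0r mulr0.
rewrite addr0 hornerCM hornerD hornerN !horner_prod_XsubC.
have -> : \prod_j (b i - b j) = 0 by rewrite (bigD1 i) //= subrr mul0r.
rewrite sub0r [X in _ = - X](bigD1 i) //= /shift_weight -mulrA -big_split /=.
have -> : b i - (b i + g) = - g by ring.
rewrite mulNr opprK; congr (_ * _); apply: eq_bigr => j neq_ji.
have bij_neq0 : b i - b j != 0 by rewrite subr_eq0 (inj_eq b_inj) eq_sym.
by field.
Qed.

Lemma sum_shift_weight_recip_prod :
  \sum_i (shift_weight b g i)%:P * ('X * \prod_(j | j != i) (1 - (b j)%:P * 'X)) =
  recip_prod b - recip_prod (fun j => b j + g).
Proof.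
apply: poly_eq_on_nonzero => t t0.
have := congr1 (fun p => t ^+ n * p.[t^-1]) sum_shift_weight_prod_XsubC => /=.
move=> Et; rewrite hornerD hornerN horner_sum mulrBr mulr_sumr in Et.
rewrite hornerD hornerN /recip_prod !horner_prod_1subX // card_ord -Et horner_sum.
apply: eq_bigr => i _.
have n_gt0 : (0 < n)%N by apply: leq_ltn_trans (ltn_ord i).
rewrite hornerCM hornerM hornerX horner_prod_1subX // hornerCM cardC1 card_ord.
have -> : t ^+ n = t * t ^+ n.-1 by rewrite -exprS prednK.
ring.
Qed.

Lemma moment0 : moment b g 0 = n%:R * g.
Proof.
have := congr1 (fun p : {poly R} => p`_1) sum_shift_weight_recip_prod.
rewrite /= coefB !coef1_prod_1subX big_split /= sumr_const card_ord opprK addKr.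
rewrite mulr_natl => <-; rewrite coef_sum; apply: eq_bigr => i _.
rewrite coefCM coefXM /= -horner_coef0 horner_prod big1 ?mulr1 // => j _.
by rewrite !hornerE subr0.
Qed.

Definition moment_poly (N : nat) : {poly R} := \poly_(q < N) moment b g q.

Lemma coef_moment_poly N k :
  (moment_poly N)`_k = if (k < N)%N then moment b g k else 0.
Proof. exact: coef_poly. Qed.

Lemma moment_polyE N :
  moment_poly N = \sum_i (shift_weight b g i)%:P * \sum_(q < N) b i ^+ q *: 'X^q.
Proof.
rewrite /moment_poly poly_def.
under eq_bigr do rewrite /moment scaler_suml.
rewrite exchange_big /=; apply: eq_bigr => i _.
by rewrite mulr_sumr; apply: eq_bigr => q _; rewrite mul_polyC scalerA.
Qed.

Lemma recip_prod_moment_poly N : exists S,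
  recip_prod b * (1 - 'X * moment_poly N) =
  recip_prod (fun j => b j + g) + 'X^(N.+1) * S.
Proof.
set D := recip_prod b; pose Dp i := \prod_(j | j != i) (1 - (b j)%:P * 'X).
have D_geom i : D * \sum_(q < N) b i ^+ q *: 'X^q = Dp i * (1 - b i ^+ N *: 'X^N).
  by rewrite /D /Dp /recip_prod (bigD1 i) //= -geometric_sum_1subX; ring.
set S := \sum_i (shift_weight b g i * b i ^+ N)%:P * Dp i; exists S.
have D_moment : D * ('X * moment_poly N) =
    (D - recip_prod (fun j => b j + g)) - 'X^(N.+1) * S.
  rewrite -sum_shift_weight_recip_prod moment_polyE !mulr_sumr -sumrB.
  apply: eq_bigr => i _; set w := shift_weight b g i; set G := \sum_(q < N) _.
  have -> : D * ('X * (w%:P * G)) = 'X * w%:P * (D * G) by ring.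
  by rewrite D_geom [(w * _)%:P]polyCM exprS -mul_polyC /Dp; ring.
by rewrite mulrBr mulr1 D_moment; ring.
Qed.

End ShiftMoments.

Lemma moment_opp (R : numFieldType) n (b : 'I_n -> R) g q :
  moment (fun k => - b k) (- g) q = - (-1) ^+ q * moment b g q.
Proof.
rewrite /moment mulr_sumr; apply: eq_bigr => i _.
have -> : shift_weight (fun k => - b k) (- g) i = - shift_weight b g i.
  rewrite /shift_weight mulNr; congr (- (_ * _)); apply: eq_bigr => j _.
  by rewrite -opprD invrN mulrNN.
by rewrite (exprNn (b i)); ring.
Qed.

Section SymmetricMoments.
Variables (R : numFieldType) (n : nat) (b : 'I_n -> R) (sigma : 'I_n -> 'I_n).
Hypotheses (b_inj : injective b) (sigma_inj : injective sigma).
Hypothesis b_sigma : forall k, b (sigma k) = -1 - b k.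

Lemma recip_prod_opp : recip_prod (fun k => - b k) = recip_prod (fun k => b k + 1).
Proof.
rewrite /recip_prod (reindex_inj sigma_inj); apply: eq_bigr => k _.
by rewrite b_sigma opprB opprK.
Qed.

Lemma recip_prod_oppD1 : recip_prod (fun k => - b k + -1) = recip_prod b.
Proof.
rewrite /recip_prod (reindex_inj sigma_inj); apply: eq_bigr => k _.
by rewrite b_sigma opprB subrK.
Qed.

Lemma moment_odd m : moment b 1 (2 * m).+1 *+ 2 =
  - \sum_(j < (2 * m).+1) (-1) ^+ (2 * m - j) * moment b 1 j * moment b 1 (2 * m - j).
Proof.
pose N := (2 * m).+2.
have nb_inj : injective (fun k => - b k) by move=> i j /oppr_inj /b_inj.
have [S ES] := recip_prod_moment_poly 1 b_inj N.
have [S' ES'] := recip_prod_moment_poly (-1) nb_inj N.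
rewrite recip_prod_opp recip_prod_oppD1 in ES'.
move: ES ES'; set D := recip_prod b; set E := recip_prod _.
set P := moment_poly b 1 N; set P' := moment_poly _ _ N => ES ES'.
(* X * P' is X * P at -X (moment_opp): EDE truncates (1 - Psi(z)) (1 - Psi(-z)) = 1. *)
have EDE : (D * E) * ('X ^+ 2 * (P * P') - 'X * (P + P')) =
    'X^(N.+1) * (E * S' + S * D + 'X^(N.+1) * S * S').
  have -> : (D * E) * ('X ^+ 2 * (P * P') - 'X * (P + P')) =
    (D * (1 - 'X * P)) * (E * (1 - 'X * P')) - D * E by ring.
  by rewrite ES ES'; ring.
have DE0 : (D * E)`_0 != 0 by rewrite coef0M !coef0_recip_prod mulr1 oner_neq0.
have := coef_eq0_of_mulXn DE0 EDE (ltnSn N).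
rewrite coefB coefXnM coefXM coefD /N /= !coef_moment_poly !ltnSn subn2 /=.
have coefPP' j : (j <= 2 * m)%N -> P`_j * P'`_(2 * m - j) =
    - ((-1) ^+ (2 * m - j) * moment b 1 j * moment b 1 (2 * m - j)).
  have lt_N k : (k <= 2 * m)%N -> (k < N)%N by move/leqW.
  by move=> le_j_2m; rewrite !coef_moment_poly !lt_N ?leq_subr // moment_opp; ring.
have sgn_odd : (-1) ^+ (2 * m).+1 = -1 :> R by rewrite exprS exprM sqrrN !expr1n mulr1.
rewrite coefM (eq_bigr _ (fun (j : 'I_(2 * m).+1) _ => coefPP' j (ltn_ord j))).
rewrite sumrN moment_opp sgn_odd.
by move/eqP; rewrite subr_eq0 => /eqP ->; ring.
Qed.

End SymmetricMoments.

Section RestrictedCasimir.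
Variables (R : numFieldType) (r n : nat).
Implicit Types (x : 'I_r -> R) (f g : ('I_r -> R) -> R).

Local Notation nu := (@restr_weight R r n).
Local Notation generic := (@generic R r n).
Local Notation half_n := (n%:R / 2 : R).

Definition ell x (k : 'I_n) : R := nu x k + (n - 1 - k)%:R - half_n.

Lemma natr_n1B (k : 'I_n) : (n - 1 - k)%:R = (n - 1)%:R - k%:R :> R.
Proof. by rewrite natrB //; case: k => k /=; lia. Qed.

Lemma ell_sub x i j : ell x i - ell x j = nu x i - nu x j + j%:R - i%:R.
Proof. by rewrite /ell !natr_n1B; ring. Qed.

Lemma ell_inj x : generic x -> injective (ell x).
Proof.
move=> gen_x i j eq_ij; apply/eqP; apply: contraT => /gen_x.
by rewrite -ell_sub eq_ij subrr eqxx.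
Qed.

Definition cmoment (t : R) (q : nat) x : R :=
  \sum_k shift_weight (ell x) 1 k * (ell x k + t) ^+ q.

Lemma Crestr_cmoment p x : @Crestr R r n p x = cmoment half_n p x.
Proof.
apply: eq_bigr => k _; rewrite mulrC subrK /shift_weight mul1r; congr (_ * _).
by apply: eq_bigr => j _; rewrite ell_sub div1r.
Qed.

Lemma cmoment0 q x : cmoment 0 q x = moment (ell x) 1 q.
Proof. by apply: eq_bigr => k _; rewrite addr0. Qed.

Lemma cmomentD t u q x :
  cmoment (t + u) q x = \sum_(s < q.+1) (u ^+ (q - s) * 'C(q, s)%:R) * cmoment t s x.
Proof.
rewrite /cmoment; under eq_bigr do rewrite addrA (addrC _ u) exprDn mulr_sumr.
rewrite exchange_big /=; apply: eq_bigr => s _; rewrite mulr_sumr.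
by apply: eq_bigr => k _; rewrite -mulr_natr; ring.
Qed.

Definition subalg_generic f : Prop :=
  exists2 g, @in_subalg R r n g & forall x, generic x -> f x = g x.

Lemma subalg_generic_ext f g :
  subalg_generic f -> (forall x, generic x -> f x = g x) -> subalg_generic g.
Proof. by case=> h h_in Efh Efg; exists h => // x gen_x; rewrite -Efg ?Efh. Qed.

Lemma subalg_generic_const c : subalg_generic (fun=> c).
Proof. by exists (fun=> c) => //; apply: sub_const. Qed.

Lemma subalg_generic_add f g :
  subalg_generic f -> subalg_generic g -> subalg_generic (fun x => f x + g x).
Proof.
case=> f' f'_in Ef [g' g'_in Eg]; exists (fun x => f' x + g' x).
  exact: sub_add.
by move=> x gen_x; rewrite Ef ?Eg.
Qed.

Lemma subalg_generic_mul f g :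
  subalg_generic f -> subalg_generic g -> subalg_generic (fun x => f x * g x).
Proof.
case=> f' f'_in Ef [g' g'_in Eg]; exists (fun x => f' x * g' x).
  exact: sub_mul.
by move=> x gen_x; rewrite Ef ?Eg.
Qed.

Lemma subalg_generic_sum (I : finType) (F : I -> ('I_r -> R) -> R) :
  (forall i, subalg_generic (F i)) -> subalg_generic (fun x => \sum_i F i x).
Proof.
move=> F_in; elim: (index_enum I) => [|i s IH].
  by apply: subalg_generic_ext (subalg_generic_const 0) _ => x _; rewrite big_nil.
apply: subalg_generic_ext (subalg_generic_add (F_in i) IH) _ => x _.
by rewrite big_cons.
Qed.

Lemma subalg_generic_cmomentD t u q :
  (forall s, (s <= q)%N -> subalg_generic (cmoment t s)) ->
  subalg_generic (cmoment (t + u) q).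
Proof.
move=> M_in; apply: subalg_generic_ext _ (fun x _ => esym (cmomentD t u q x)).
apply: subalg_generic_sum => s; apply: subalg_generic_mul.
  exact: subalg_generic_const.
exact: M_in (ltn_ord s).
Qed.

Lemma subalg_generic_cmoment_even m : subalg_generic (cmoment half_n (2 * m)).
Proof.
have [->|m_gt0] := posnP m.
  apply: subalg_generic_ext (subalg_generic_const (n%:R * 1)) _ => x gen_x.
  by rewrite -(moment0 1 (ell_inj gen_x)); apply: eq_bigr => k _; rewrite !expr0.
exists (@Crestr R r n (2 * m)); first exact: sub_gen.
by move=> x _; rewrite Crestr_cmoment.
Qed.

Hypothesis r2_le_n : (2 * r <= n)%N.

Lemma restr_weight_rev x k : nu x (rev_ord k) = - nu x k.
Proof.
rewrite /restr_weight /=; case: k => k lt_kn /=.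
have -> : (n - 1 - (n - k.+1) = k)%N by lia.
have -> : (n - 1 - k = n - k.+1)%N by lia.
by repeat case: ifP => ?; rewrite ?opprK ?oppr0 //; exfalso; lia.
Qed.

Lemma ell_rev x k : ell x (rev_ord k) = -1 - ell x k.
Proof.
rewrite /ell restr_weight_rev /=; case: k => k lt_kn /=.
have -> : (n - 1 - (n - k.+1) = k)%N by lia.
have -> : n%:R = (n - k.+1)%:R + k%:R + 1 :> R by rewrite -natrD natr1; congr _%:R; lia.
have -> : (n - 1 - k = n - k.+1)%N by lia.
by field.
Qed.

Lemma subalg_generic_cmoment_odd m :
  (forall s, (s <= 2 * m)%N -> subalg_generic (cmoment 0 s)) ->
  subalg_generic (cmoment 0 (2 * m).+1).
Proof.
move=> M0_in.
pose F (j : 'I_(2 * m).+1) x :=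
  (-1) ^+ (2 * m - j) * cmoment 0 j x * cmoment 0 (2 * m - j) x.
apply: subalg_generic_ext
  (subalg_generic_mul (subalg_generic_const (- 2^-1)) (subalg_generic_sum (F := F) _)) _.
  move=> j; apply: subalg_generic_mul; first apply: subalg_generic_mul.
  - exact: subalg_generic_const.
  - exact: M0_in (ltn_ord j).
  - exact/M0_in/leq_subr.
move=> x gen_x; have two_neq0 : 2 != 0 :> R by rewrite pnatr_eq0.
apply: (mulIf two_neq0); rewrite [RHS]mulr_natr cmoment0.
rewrite (moment_odd (ell_inj gen_x) (@rev_ord_inj n) (ell_rev x)).
under eq_bigr do rewrite /F !cmoment0.
by field.
Qed.

Lemma subalg_generic_cmoment q :
  subalg_generic (cmoment 0 q) /\ subalg_generic (cmoment half_n q).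
Proof.
elim/ltn_ind: q => q.
have [[m ->]|[m ->]] : (exists m, q = (2 * m).+1) \/ (exists m, q = (2 * m)%N).
  by have := odd_double_half q; case: (odd q) => /= q_eq; [left|right]; exists q./2; lia.
- move=> IH; have M0_in : subalg_generic (cmoment 0 (2 * m).+1).
    by apply: subalg_generic_cmoment_odd => s le_s; case: (IH s le_s).
  split=> //; rewrite -[half_n]add0r; apply: subalg_generic_cmomentD => s.
  by rewrite leq_eqVlt => /predU1P [-> //|/IH []].
- move=> IH; split; last exact: subalg_generic_cmoment_even.
  have := @subalg_generic_cmomentD half_n (- half_n) (2 * m); rewrite subrr; apply=> s.
  by rewrite leq_eqVlt => /predU1P [->|/IH []]; first exact: subalg_generic_cmoment_even.
Qed.

End RestrictedCasimir.

Theorem lemma3 (R : numClosedFieldType) (r n i : nat) :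
  (1 <= r)%N -> (2 * r <= n)%N ->
  exists f : ('I_r -> R) -> R,
    @in_subalg R r n f /\
    forall x : 'I_r -> R, @generic R r n x -> @Crestr R r n (2 * i + 1) x = f x.
Proof.
move=> _ r2_le_n.
have [_ [f f_in Ef]] := @subalg_generic_cmoment R r n r2_le_n (2 * i + 1).
by exists f; split=> // x gen_x; rewrite Crestr_cmoment Ef.
Qed.
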